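(* Suppose A1–A3 hold and that $\sum_{k=0}^{\infty}\nu_k<+\infty$. Let $\{x_k\}$ be generated by Algorithm 1 and let $\epsilon\in(0,1)$. If $T$ is a positive integer with $$T\ge 2\max\left\{\sum_{k=0}^{\infty}\nu_k,\ f(x_0)-f_{low}\right\}\kappa_c^{-1}\epsilon^{-2},$$ then $\min_{k=0,\dots,T-1}\|\nabla f(x_k)\|\le\epsilon$.
   Context: Let $(X,\langle\cdot,\cdot\rangle)$ be a real Hilbert space with induced norm $\|\cdot\|$, and $f:X\to\mathbb{R}$ Fréchet differentiable with gradient $\nabla f$. Algorithm 1 (general non-monotone descent algorithm): parameters $x_0\in X$, $\alpha_0>0$, $\beta,\rho\in(0,1)$. For $k=0,1,2,\dots$: choose $d_k\in X$ with $\langle\nabla f(x_k),d_k\rangle<0$; then for $l=0,1,2,\dots$ choose a number $\nu_{k,l}\ge 0$ and test $$f(x_k+\alpha_k\beta^l d_k)\le f(x_k)+\rho\alpha_k\beta^l\langle\nabla f(x_k),d_k\rangle+\nu_{k,l};$$ let $l_k$ be the first $l$ for which this holds, set $\nu_k:=\nu_{k,l_k}$, $x_{k+1}=x_k+\alpha_k\beta^{l_k}d_k$ and $\alpha_{k+1}=\alpha_k\beta^{l_k-1}$. It is assumed the algorithm generates infinite sequences (all $l_k$ finite). Assumptions: A1: $\nabla f$ is Lipschitz continuous with constant $L>0$. A2: there is $f_{low}\in\mathbb{R}$ with $f(x)\ge f_{low}$ for all $x\in X$. A3: there are constants $c_1,c_2>0$ with $\langle\nabla f(x_k),d_k\rangle\le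 -c_1\|\nabla f(x_k)\|^2$ and $\|d_k\|\le c_2\|\nabla f(x_k)\|$ for all $k$. Constant: $\kappa_c=\min\left\{\rho\beta\alpha_0c_1,\ \frac{2\beta\rho(1-\rho)c_1^2}{Lc_2^2}\right\}$. *)

From Stdlib Require Import Reals Lra.
Open Scope R_scope.

Record hilbert (X : Type) := Hilbert {
  hzero : X;
  hadd : X -> X -> X;
  hopp : X -> X;
  hscal : R -> X -> X;
  hinner : X -> X -> R;
  hadd_assoc : forall x y z, hadd x (hadd y z) = hadd (hadd x y) z;
  hadd_comm : forall x y, hadd x y = hadd y x;
  hadd_0 : forall x, hadd x hzero = x;
  hadd_opp : forall x, hadd x (hopp x) = hzero;
  hscal_assoc : forall a b x, hscal a (hscal b x) = hscal (a * b) x;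
  hscal_1 : forall x, hscal 1 x = x;
  hscal_distr_v : forall a x y, hscal a (hadd x y) = hadd (hscal a x) (hscal a y);
  hscal_distr_s : forall a b x, hscal (a + b) x = hadd (hscal a x) (hscal b x);
  hinner_sym : forall x y, hinner x y = hinner y x;
  hinner_add : forall x y z, hinner (hadd x y) z = hinner x z + hinner y z;
  hinner_scal : forall a x y, hinner (hscal a x) y = a * hinner x y;
  hinner_pos : forall x, 0 <= hinner x x;
  hinner_def : forall x, hinner x x = 0 -> x = hzero;
  hcomplete : forall u : nat -> X,
    (forall eps, eps > 0 -> exists N, forall m n, (m >= N)%nat -> (n >= N)%nat ->
        sqrt (hinner (hadd (u m) (hopp (u n))) (hadd (u m) (hopp (u n)))) < eps) ->
    exists l, forall eps, eps > 0 -> exists N, forall n, (n >= N)%nat ->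
        sqrt (hinner (hadd (u n) (hopp l)) (hadd (u n) (hopp l))) < eps
}.

Arguments hzero {X} _.
Arguments hadd {X} _ _ _.
Arguments hopp {X} _ _.
Arguments hscal {X} _ _ _.
Arguments hinner {X} _ _ _.

Definition hnorm {X} (H : hilbert X) (x : X) : R := sqrt (hinner H x x).
Definition hsub {X} (H : hilbert X) (x y : X) : X := hadd H x (hopp H y).

Definition frechet_gradient {X} (H : hilbert X) (f : X -> R) (g : X -> X) : Prop :=
  forall x eps, eps > 0 -> exists delta, delta > 0 /\
    forall h, hnorm H h < delta ->
      Rabs (f (hadd H x h) - f x - hinner H (g x) h) <= eps * hnorm H h.

(* Algorithm 1 (general non-monotone descent algorithm): the sequences
   x k, alpha k, d k, the trial numbers nu k l = nu_{k,l}, and the accepted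
   indices l k = l_k are those produced by a run of the algorithm. *)
Definition algorithm1 {X} (H : hilbert X) (f : X -> R) (g : X -> X)
  (x0 : X) (alpha0 beta rho : R)
  (x : nat -> X) (alpha : nat -> R) (d : nat -> X)
  (nu : nat -> nat -> R) (l : nat -> nat) : Prop :=
  alpha0 > 0 /\ 0 < beta < 1 /\ 0 < rho < 1 /\
  x 0%nat = x0 /\ alpha 0%nat = alpha0 /\
  (forall k, hinner H (g (x k)) (d k) < 0) /\
  (forall k j, 0 <= nu k j) /\
  (forall k,
     f (hadd H (x k) (hscal H (alpha k * beta ^ (l k)) (d k)))
       <= f (x k) + rho * alpha k * beta ^ (l k) * hinner H (g (x k)) (d k) + nu k (l k) /\
     (forall j, (j < l k)%nat ->
       ~ (f (hadd H (x k) (hscal H (alpha k * beta ^ j) (d k)))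
          <= f (x k) + rho * alpha k * beta ^ j * hinner H (g (x k)) (d k) + nu k j)) /\
     x (S k) = hadd H (x k) (hscal H (alpha k * beta ^ (l k)) (d k)) /\
     alpha (S k) = alpha k * powerRZ beta (Z.of_nat (l k) - 1)).

Definition kappa_c (alpha0 beta rho c1 c2 L : R) : R :=
  Rmin (rho * beta * alpha0 * c1) (2 * beta * rho * (1 - rho) * c1 ^ 2 / (L * c2 ^ 2)).

(* By the descent lemma for an L-Lipschitz gradient and A3, the Armijo test
   (even with nu = 0) is passed by every step t <= tau := 2 (1 - rho) c1 / (L c2^2).
   So every rejected trial exceeds tau, the trial steps alpha_k stay above
   min (alpha0, tau), and every accepted step is at least beta min (alpha0, tau).
   The accepted test then gives
   f (x (k+1)) <= f (x k) - kappa_c |grad f (x k)|^2 + nu_k, and telescoping over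
   k < T with f >= f_low gives kappa_c sum_{k<T} |grad f (x k)|^2
   <= f x0 - f_low + sum_k nu_k <= kappa_c T eps^2, so some term is <= eps^2. *)

From Stdlib Require Import Reals Lra Lia Psatz.
Open Scope R_scope.

Section HilbertFacts.

Context {X : Type} {H : hilbert X}.

Lemma hscal_0_l x : hscal H 0 x = hzero H.
Proof.
  assert (E : hscal H 0 x = hadd H (hscal H 0 x) (hscal H 0 x)).
  { rewrite <- hscal_distr_s. f_equal. ring. }
  rewrite <- (hadd_opp _ H (hscal H 0 x)).
  rewrite E at 2. rewrite <- hadd_assoc, hadd_opp, hadd_0. reflexivity.
Qed.

Lemma hinner_0_l y : hinner H (hzero H) y = 0.
Proof. rewrite <- (hscal_0_l y), hinner_scal. ring. Qed.

Lemma hinner_opp_l x y : hinner H (hopp H x) y = - hinner H x y.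
Proof.
  assert (E := hinner_add _ H x (hopp H x) y).
  rewrite hadd_opp, hinner_0_l in E. lra.
Qed.

Lemma hinner_sub_l x y z : hinner H (hsub H x y) z = hinner H x z - hinner H y z.
Proof. unfold hsub. rewrite hinner_add, hinner_opp_l. ring. Qed.

Lemma hinner_add_r x y z : hinner H x (hadd H y z) = hinner H x y + hinner H x z.
Proof. rewrite hinner_sym, hinner_add, (hinner_sym _ H y), (hinner_sym _ H z). reflexivity. Qed.

Lemma hinner_scal_r a x y : hinner H x (hscal H a y) = a * hinner H x y.
Proof. rewrite hinner_sym, hinner_scal, hinner_sym. reflexivity. Qed.

Lemma hnorm_nonneg x : 0 <= hnorm H x.
Proof. apply sqrt_pos. Qed.

Lemma hnorm_sqr x : hnorm H x * hnorm H x = hinner H x x.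
Proof. apply sqrt_sqrt, hinner_pos. Qed.

Lemma hnorm_scal a x : hnorm H (hscal H a x) = Rabs a * hnorm H x.
Proof.
  unfold hnorm. rewrite hinner_scal, hinner_scal_r, <- Rmult_assoc.
  rewrite sqrt_mult by (apply Rle_0_sqr || apply hinner_pos).
  change (a * a) with (Rsqr a). rewrite sqrt_Rsqr_abs. reflexivity.
Qed.

Lemma hadd_scal_plus x a b v :
  hadd H x (hscal H (a + b) v) = hadd H (hadd H x (hscal H a v)) (hscal H b v).
Proof. rewrite hscal_distr_s, hadd_assoc. reflexivity. Qed.

Lemma hsub_add_l x v : hsub H (hadd H x v) x = v.
Proof.
  unfold hsub. rewrite (hadd_comm _ H x v), <- hadd_assoc, hadd_opp, hadd_0. reflexivity.
Qed.

Lemma cauchy_schwarz x y : hinner H x y <= hnorm H x * hnorm H y.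
Proof.
  set (A := hinner H x x); set (B := hinner H x y); set (C := hinner H y y).
  assert (HA : 0 <= A) by apply hinner_pos.
  assert (HC : 0 <= C) by apply hinner_pos.
  assert (HBAC : B * B <= A * C).
  { destruct (Req_dec A 0) as [A0 | A0].
    - assert (Hx : x = hzero H) by (apply (hinner_def _ H); exact A0).
      unfold B. rewrite Hx, hinner_0_l, A0. lra.
    - (* nonnegativity of the quadratic s |-> |s x + y|^2 at its minimiser s = -B/A *)
      assert (P := hinner_pos _ H (hadd H (hscal H (- B / A) x) y)).
      rewrite hinner_add, !hinner_add_r, !hinner_scal, !hinner_scal_r,
        (hinner_sym _ H y x) in P.
      fold A B C in P.
      replace (- B / A * (- B / A * A) + - B / A * B + (- B / A * B + C))
        with (C - B * B / A) in P by (field; lra).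
      assert (0 <= (C - B * B / A) * A) by (apply Rmult_le_pos; lra).
      replace ((C - B * B / A) * A) with (A * C - B * B) in * by (field; lra).
      lra. }
  unfold hnorm. fold A C. rewrite <- sqrt_mult by assumption.
  apply Rle_trans with (Rabs B); [apply Rle_abs |].
  rewrite <- sqrt_Rsqr_abs. apply sqrt_le_1_alt. unfold Rsqr. lra.
Qed.

End HilbertFacts.

Lemma derivable_pt_lim_along_line {X} (H : hilbert X) f g x v s :
  frechet_gradient H f g ->
  derivable_pt_lim (fun t => f (hadd H x (hscal H t v))) s
    (hinner H (g (hadd H x (hscal H s v))) v).
Proof.
  intros Hf e He.
  set (y := hadd H x (hscal H s v)).
  set (nv := hnorm H v).
  assert (Hnv : 0 <= nv) by apply hnorm_nonneg.
  set (q := e / (nv + 1)).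
  assert (Hq : q > 0) by (apply Rdiv_lt_0_compat; lra).
  destruct (Hf y q Hq) as [delta [Hdel Hd]].
  assert (Hdp : 0 < delta / (nv + 1)) by (apply Rdiv_lt_0_compat; lra).
  exists (mkposreal _ Hdp). simpl. intros h Hh0 Hh.
  rewrite hadd_scal_plus. fold y.
  assert (Hha : 0 < Rabs h) by (apply Rabs_pos_lt; assumption).
  assert (Hsmall : Rabs h * (nv + 1) < delta).
  { apply (Rmult_lt_reg_r (/ (nv + 1))); [apply Rinv_0_lt_compat; lra |].
    rewrite Rmult_assoc, Rinv_r by lra. unfold Rdiv in Hh. lra. }
  assert (Hn : hnorm H (hscal H h v) < delta) by (rewrite hnorm_scal; fold nv; nra).
  specialize (Hd _ Hn). rewrite hnorm_scal, hinner_scal_r in Hd. fold nv in Hd.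
  set (F := f (hadd H y (hscal H h v))) in *.
  set (D := hinner H (g y) v) in *.
  replace ((F - f y) / h - D) with ((F - f y - h * D) / h) by (field; assumption).
  unfold Rdiv. rewrite Rabs_mult, Rabs_inv.
  apply Rle_lt_trans with (q * nv).
  - apply (Rmult_le_reg_r (Rabs h)); [assumption |].
    rewrite Rmult_assoc, Rinv_l by lra. lra.
  - assert (q * (nv + 1) = e) by (unfold q; field; lra). nra.
Qed.

Lemma derivable_pt_lim_quadratic a b s :
  derivable_pt_lim (fun t => t * a + t * t * b) s (a + 2 * s * b).
Proof.
  replace (a + 2 * s * b) with (1 * a + s * 0 + ((1 * s + s * 1) * b + s * s * 0)) by ring.
  apply (derivable_pt_lim_plus (fun t => t * a) (fun t => t * t * b)).
  - apply (derivable_pt_lim_mult id (fct_cte a));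
      [apply derivable_pt_lim_id | apply derivable_pt_lim_const].
  - apply (derivable_pt_lim_mult (fun t => t * t) (fct_cte b));
      [| apply derivable_pt_lim_const].
    apply (derivable_pt_lim_mult id id); apply derivable_pt_lim_id.
Qed.

Lemma descent_lemma {X} (H : hilbert X) f g L x v :
  frechet_gradient H f g ->
  (forall y z, hnorm H (hsub H (g y) (g z)) <= L * hnorm H (hsub H y z)) ->
  f (hadd H x v) <= f x + hinner H (g x) v + L / 2 * hinner H v v.
Proof.
  intros Hf HLip.
  set (a := hinner H (g x) v); set (b := L / 2 * hinner H v v).
  (* mean value theorem for s |-> f (x + s v) - (s a + s^2 b) on [0, 1] *)
  destruct (MVT_cor2 (fun s => f (hadd H x (hscal H s v)) - (s * a + s * s * b))
     (fun c => hinner H (g (hadd H x (hscal H c v))) v - (a + 2 * c * b)) 0 1 Rlt_0_1)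
    as [c [Hmvt Hc]].
  { intros c _. apply (derivable_pt_lim_minus (fun s => f (hadd H x (hscal H s v)))
      (fun s => s * a + s * s * b));
      [apply derivable_pt_lim_along_line, Hf | apply derivable_pt_lim_quadratic]. }
  rewrite hscal_0_l, hadd_0, hscal_1 in Hmvt.
  assert (Hslope : hinner H (g (hadd H x (hscal H c v))) v - a <= 2 * c * b).
  { unfold a. rewrite <- hinner_sub_l.
    eapply Rle_trans; [apply cauchy_schwarz |].
    eapply Rle_trans; [apply Rmult_le_compat_r; [apply hnorm_nonneg | apply HLip] |].
    rewrite hsub_add_l, hnorm_scal, Rabs_pos_eq by lra.
    unfold b. rewrite <- hnorm_sqr. lra. }
  lra.
Qed.

Definition armijo_threshold (rho c1 c2 L : R) : R := 2 * (1 - rho) * c1 / (L * c2 ^ 2).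

Lemma armijo_threshold_pos rho c1 c2 L :
  rho < 1 -> 0 < c1 -> 0 < c2 -> 0 < L -> 0 < armijo_threshold rho c1 c2 L.
Proof.
  intros. unfold armijo_threshold.
  apply Rdiv_lt_0_compat; [| apply Rmult_lt_0_compat; [| apply pow_lt]]; nra.
Qed.

Lemma sufficient_decrease {X} (H : hilbert X) f g L rho c1 c2 x v t :
  frechet_gradient H f g ->
  (forall y z, hnorm H (hsub H (g y) (g z)) <= L * hnorm H (hsub H y z)) ->
  0 < L -> rho < 1 -> 0 < c2 ->
  hinner H (g x) v <= - c1 * hnorm H (g x) ^ 2 ->
  hnorm H v <= c2 * hnorm H (g x) ->
  0 < t <= armijo_threshold rho c1 c2 L ->
  f (hadd H x (hscal H t v)) <= f x + rho * t * hinner H (g x) v.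
Proof.
  intros Hf HLip HL Hrho Hc2 Hdir Hv Ht.
  assert (Hdesc := descent_lemma H f g L x (hscal H t v) Hf HLip).
  rewrite hinner_scal_r, hinner_scal, hinner_scal_r in Hdesc.
  set (I := hinner H (g x) v) in *; set (N := hinner H v v) in *.
  set (G := hnorm H (g x)) in *.
  assert (HG : 0 <= G ^ 2) by apply pow2_ge_0.
  assert (HN : N <= c2 ^ 2 * G ^ 2).
  { unfold N. rewrite <- hnorm_sqr. assert (0 <= hnorm H v) by apply hnorm_nonneg. nra. }
  assert (Hcurv : L * t * N <= 2 * (1 - rho) * c1 * G ^ 2).
  { assert (Htau : L * armijo_threshold rho c1 c2 L * c2 ^ 2 = 2 * (1 - rho) * c1).
    { unfold armijo_threshold. assert (c2 ^ 2 <> 0) by (apply pow_nonzero; lra). field. lra. }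
    assert (L * t * N <= L * t * (c2 ^ 2 * G ^ 2)) by (apply Rmult_le_compat_l; nra).
    assert (0 <= c2 ^ 2 * G ^ 2) by (apply Rmult_le_pos; [apply pow2_ge_0 | assumption]).
    assert (0 <= L * (c2 ^ 2 * G ^ 2) * (armijo_threshold rho c1 c2 L - t))
      by (apply Rmult_le_pos; [apply Rmult_le_pos |]; lra).
    nra. }
  assert (Hbracket : (1 - rho) * I + L / 2 * t * N <= 0).
  { assert ((1 - rho) * I <= (1 - rho) * (- c1 * G ^ 2)) by (apply Rmult_le_compat_l; lra).
    lra. }
  assert (t * ((1 - rho) * I + L / 2 * t * N) <= 0) by nra.
  lra.
Qed.

Lemma kappa_c_pos alpha0 beta rho c1 c2 L :
  0 < alpha0 -> 0 < beta -> 0 < rho < 1 -> 0 < c1 -> 0 < c2 -> 0 < L ->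
  0 < kappa_c alpha0 beta rho c1 c2 L.
Proof.
  intros. unfold kappa_c. apply Rmin_pos; [repeat apply Rmult_lt_0_compat; lra |].
  assert (0 < c1 ^ 2) by (apply pow_lt; lra).
  assert (0 < c2 ^ 2) by (apply pow_lt; lra).
  apply Rdiv_lt_0_compat; repeat apply Rmult_lt_0_compat; lra.
Qed.

(* The second term of kappa_c is rho c1 beta tau, with tau the Armijo threshold. *)
Lemma kappa_c_le alpha0 beta rho c1 c2 L :
  0 < beta -> 0 < rho -> 0 < c1 -> 0 < c2 -> 0 < L ->
  kappa_c alpha0 beta rho c1 c2 L
    <= rho * c1 * (beta * Rmin alpha0 (armijo_threshold rho c1 c2 L)).
Proof.
  intros. unfold kappa_c.
  replace (2 * beta * rho * (1 - rho) * c1 ^ 2 / (L * c2 ^ 2))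
    with (rho * c1 * (beta * armijo_threshold rho c1 c2 L)).
  2: { unfold armijo_threshold. assert (c2 ^ 2 <> 0) by (apply pow_nonzero; lra).
       field. lra. }
  unfold Rmin at 2. destruct (Rle_dec _ _).
  - eapply Rle_trans; [apply Rmin_l | lra].
  - apply Rmin_r.
Qed.

Section Backtracking.

Context {X : Type} {H : hilbert X} {f : X -> R} {g : X -> X}
  {alpha0 beta rho L c1 c2 : R}
  {x : nat -> X} {alpha : nat -> R} {d : nat -> X}
  {nu : nat -> nat -> R} {l : nat -> nat}.

Hypothesis Hf : frechet_gradient H f g.
Hypothesis HLip : forall y z, hnorm H (hsub H (g y) (g z)) <= L * hnorm H (hsub H y z).
Hypothesis HL : 0 < L.
Hypothesis Hc1 : 0 < c1.
Hypothesis Hc2 : 0 < c2.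
Hypothesis Hdir : forall k, hinner H (g (x k)) (d k) <= - c1 * hnorm H (g (x k)) ^ 2.
Hypothesis Hdbound : forall k, hnorm H (d k) <= c2 * hnorm H (g (x k)).
Hypothesis Halpha0 : 0 < alpha0.
Hypothesis Hbeta : 0 < beta < 1.
Hypothesis Hrho : 0 < rho < 1.
Hypothesis Halpha_0 : alpha 0%nat = alpha0.
Hypothesis Hnu : forall k j, 0 <= nu k j.
Hypothesis Hstep : forall k,
  f (hadd H (x k) (hscal H (alpha k * beta ^ (l k)) (d k)))
    <= f (x k) + rho * alpha k * beta ^ (l k) * hinner H (g (x k)) (d k) + nu k (l k) /\
  (forall j, (j < l k)%nat ->
    ~ (f (hadd H (x k) (hscal H (alpha k * beta ^ j) (d k)))
       <= f (x k) + rho * alpha k * beta ^ j * hinner H (g (x k)) (d k) + nu k j)) /\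
  x (S k) = hadd H (x k) (hscal H (alpha k * beta ^ (l k)) (d k)) /\
  alpha (S k) = alpha k * powerRZ beta (Z.of_nat (l k) - 1).

Let tau := armijo_threshold rho c1 c2 L.

Lemma step_floor_pos : 0 < Rmin alpha0 tau.
Proof. apply Rmin_pos; [| apply armijo_threshold_pos]; lra. Qed.

Lemma alpha_pos k : 0 < alpha k.
Proof.
  induction k as [| k IH]; [lra |].
  destruct (Hstep k) as (_ & _ & _ & ->).
  apply Rmult_lt_0_compat; [assumption | apply powerRZ_lt; lra].
Qed.

Lemma rejected_trial_gt k j : (j < l k)%nat -> tau < alpha k * beta ^ j.
Proof.
  intros Hj. destruct (Rle_or_lt (alpha k * beta ^ j) tau) as [Hsmall | Hbig]; [| exact Hbig].
  exfalso. destruct (Hstep k) as (_ & Hrej & _). apply (Hrej j Hj).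
  assert (Hpos : 0 < alpha k * beta ^ j)
    by (apply Rmult_lt_0_compat; [apply alpha_pos | apply pow_lt; lra]).
  assert (Hdec := sufficient_decrease H f g L rho c1 c2 (x k) (d k) _
                    Hf HLip HL (proj2 Hrho) Hc2 (Hdir k) (Hdbound k) (conj Hpos Hsmall)).
  specialize (Hnu k j). rewrite !Rmult_assoc in *. lra.
Qed.

(* After an acceptance at l k = n + 1 the next step restarts at alpha k beta^n, a rejected trial. *)
Lemma alpha_ge k : Rmin alpha0 tau <= alpha k.
Proof.
  induction k as [| k IH]; [rewrite Halpha_0; apply Rmin_l |].
  destruct (Hstep k) as (_ & _ & _ & ->).
  destruct (l k) as [| n] eqn:El.
  - assert (1 <= / beta) by (rewrite <- Rinv_1; apply Rinv_le_contravar; lra).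
    assert (Ha := alpha_pos k). simpl. rewrite Rmult_1_r. nra.
  - replace (Z.of_nat (S n) - 1)%Z with (Z.of_nat n) by lia.
    rewrite <- pow_powerRZ.
    assert (Hrej := rejected_trial_gt k n). rewrite El in Hrej.
    specialize (Hrej (Nat.lt_succ_diag_r n)). assert (Rmin alpha0 tau <= tau) by apply Rmin_r.
    lra.
Qed.

Lemma accepted_step_ge k : beta * Rmin alpha0 tau <= alpha k * beta ^ l k.
Proof.
  destruct (l k) as [| n] eqn:El.
  - assert (Ha := alpha_ge k).
    assert (Hmin := step_floor_pos). simpl. nra.
  - assert (Hrej := rejected_trial_gt k n). rewrite El in Hrej.
    specialize (Hrej (Nat.lt_succ_diag_r n)). assert (Rmin alpha0 tau <= tau) by apply Rmin_r.
    simpl. nra.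
Qed.

Lemma iterate_decrease k :
  f (x (S k)) <= f (x k) - kappa_c alpha0 beta rho c1 c2 L * hnorm H (g (x k)) ^ 2
                 + nu k (l k).
Proof.
  destruct (Hstep k) as (Hacc & _ & -> & _).
  assert (Hkap := kappa_c_le alpha0 beta rho c1 c2 L (proj1 Hbeta) (proj1 Hrho) Hc1 Hc2 HL).
  assert (Ht := accepted_step_ge k). fold tau in Hkap.
  assert (HI := Hdir k).
  set (t := alpha k * beta ^ l k) in *.
  set (Q := hnorm H (g (x k)) ^ 2) in *.
  assert (HQ : 0 <= Q) by apply pow2_ge_0.
  assert (Hmin := step_floor_pos).
  assert (rho * t * hinner H (g (x k)) (d k) <= rho * t * (- c1 * Q))
    by (apply Rmult_le_compat_l; [apply Rmult_le_pos |]; nra).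
  assert (kappa_c alpha0 beta rho c1 c2 L * Q <= rho * c1 * t * Q).
  { apply Rmult_le_compat_r; [assumption |].
    assert (0 <= rho * c1 * (t - beta * Rmin alpha0 tau))
      by (apply Rmult_le_pos; [apply Rmult_le_pos |]; lra).
    nra. }
  replace (rho * alpha k * beta ^ l k) with (rho * t) in Hacc by (unfold t; ring).
  lra.
Qed.

End Backtracking.

Lemma sum_telescope_le (F a b : nat -> R) kap :
  (forall k, F (S k) <= F k - kap * a k + b k) ->
  forall n, F (S n) + kap * sum_f_R0 a n <= F 0%nat + sum_f_R0 b n.
Proof.
  intros Hdec n. induction n as [| n IH]; simpl.
  - specialize (Hdec 0%nat). lra.
  - specialize (Hdec (S n)). lra.
Qed.

Lemma exists_le_of_sum_le (a : nat -> R) c n :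
  sum_f_R0 a n <= c * INR (S n) -> exists k, (k <= n)%nat /\ a k <= c.
Proof.
  induction n as [| n IH]; intros Hsum.
  - exists 0%nat. simpl in Hsum. split; [lia | lra].
  - destruct (Rle_lt_dec (a (S n)) c) as [Hle | Hgt].
    + exists (S n). split; [lia | exact Hle].
    + destruct IH as [k [Hk Hak]].
      { rewrite S_INR in Hsum. change (sum_f_R0 a (S n)) with (sum_f_R0 a n + a (S n)) in Hsum.
        lra. }
      exists k. split; [lia | exact Hak].
Qed.

Theorem corollary1 (X : Type) (H : hilbert X) (f : X -> R) (g : X -> X)
  (x0 : X) (alpha0 beta rho : R)
  (x : nat -> X) (alpha : nat -> R) (d : nat -> X)
  (nu : nat -> nat -> R) (l : nat -> nat)
  (L flow c1 c2 Snu eps : R) (T : nat) :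
  frechet_gradient H f g ->
  algorithm1 H f g x0 alpha0 beta rho x alpha d nu l ->
  (* A1 *)
  L > 0 -> (forall y z, hnorm H (hsub H (g y) (g z)) <= L * hnorm H (hsub H y z)) ->
  (* A2 *)
  (forall y, f y >= flow) ->
  (* A3 *)
  c1 > 0 -> c2 > 0 ->
  (forall k, hinner H (g (x k)) (d k) <= - c1 * (hnorm H (g (x k))) ^ 2) ->
  (forall k, hnorm H (d k) <= c2 * hnorm H (g (x k))) ->
  (* sum_k nu_k converges, with sum Snu *)
  infinite_sum (fun k => nu k (l k)) Snu ->
  0 < eps < 1 ->
  (1 <= T)%nat ->
  INR T >= 2 * Rmax Snu (f x0 - flow) / kappa_c alpha0 beta rho c1 c2 L / eps ^ 2 ->
  exists k, (k < T)%nat /\ hnorm H (g (x k)) <= eps.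
Proof.
  intros Hf Halg HL HLip Hlow Hc1 Hc2 Hdir Hdbound Hsum Heps HT HTbig.
  destruct Halg as (Halpha0 & Hbeta & Hrho & Hx0 & Halpha_0 & _ & Hnu & Hstep).
  destruct T as [| n]; [lia |].
  set (kap := kappa_c alpha0 beta rho c1 c2 L) in *.
  assert (Hkap : 0 < kap) by (apply kappa_c_pos; lra).
  assert (Htel := sum_telescope_le (fun k => f (x k)) (fun k => hnorm H (g (x k)) ^ 2)
    (fun k => nu k (l k)) kap
    (iterate_decrease Hf HLip HL Hc1 Hc2 Hdir Hdbound Halpha0 Hbeta Hrho Halpha_0 Hnu Hstep) n).
  assert (Hnus : sum_f_R0 (fun k => nu k (l k)) n <= Snu) by (apply sum_incr; auto).
  assert (Hflow := Hlow (x (S n))).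
  assert (HM1 := Rmax_l Snu (f x0 - flow)); assert (HM2 := Rmax_r Snu (f x0 - flow)).
  assert (He2 : 0 < eps ^ 2) by (apply pow_lt; lra).
  assert (HTkap : 2 * Rmax Snu (f x0 - flow) <= kap * (eps ^ 2 * INR (S n))).
  { assert (Hmul : 2 * Rmax Snu (f x0 - flow) / kap / eps ^ 2 * (kap * eps ^ 2)
                   <= INR (S n) * (kap * eps ^ 2))
      by (apply Rmult_le_compat_r; [apply Rmult_le_pos |]; lra).
    replace (2 * Rmax Snu (f x0 - flow) / kap / eps ^ 2 * (kap * eps ^ 2))
      with (2 * Rmax Snu (f x0 - flow)) in Hmul by (field; lra).
    lra. }
  destruct (exists_le_of_sum_le (fun k => hnorm H (g (x k)) ^ 2) (eps ^ 2) n)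
    as [k [Hk Hgk]].
  { apply (Rmult_le_reg_l kap); [exact Hkap |]. cbv beta in Htel. rewrite Hx0 in Htel. lra. }
  exists k. split; [lia |].
  assert (0 <= hnorm H (g (x k))) by apply hnorm_nonneg. nra.
Qed.
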